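(* Let $G$ be a finite undirected graph, $\tau\ge1$ an integer, $v\in V(G)$, and $e=(u,v)\in E(G)$. Then $\phi_\tau(e,G)\ge|V(\Omega(v))|$.
   Context: Graphs are finite, simple, undirected and unweighted; paths may repeat vertices and their length is the number of edges. For vertices $v,u$ of a graph $H$, $u$ is $\tau$-hop reachable from $v$ in $H$ (written $u\rightarrow_\tau v$) if there is a path between them in $H$ of length at most $\tau$. $N_\tau(v,H)$ is the set of vertices $u\ne v$ that are $\tau$-hop reachable from $v$ in $H$. For an edge $e=(u,v)$ of $H$, $\Delta_\tau(e,H)=N_\tau(u,H)\cap N_\tau(v,H)$ and $\mathrm{sup}_\tau(e,H)=|\Delta_\tau(e,H)|$. The $(k,\tau)$-truss of $G$ is the maximal subgraph $G'$ of $G$ such that $\mathrm{sup}_\tau(e,G')\ge k-2$ for every $e\in E(G')$ (supports computed inside $G'$) and no more edges of $G$ can be added while keeping this property. The higher-order truss number $\phi_\tau(e,G)$ is the maximum $k$ such that $e$ belongs to the $(k,\tau)$-truss of $G$. The vertex centric $\tau$-diameter subgraph $\Omega(v)$ of $v$ is the subgraph of $G$ induced by $\{v\}\cup\{w : w\rightarrow_{\lfloor\tau/2\rfloor} v \text{ in } G\}$. *)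

(* Graphs: a finite type T of vertices with a symmetric,
   irreflexive boolean adjacency relation g. Subgraphs are represented by
   their (symmetric) sets of ordered edge pairs. *)
From mathcomp Require Import all_boot.
Set Implicit Arguments. Unset Strict Implicit. Unset Printing Implicit Defensive.

(* y is t-hop reachable from x along R: a walk x = x0, x1, ..., xn = y with
   R x_i x_{i+1} and n <= t (vertices may repeat). *)
Definition reach (T : finType) (R : rel T) (t : nat) (x y : T) : bool :=
  [exists n : 'I_t.+1, exists p : n.-tuple T, path R x p && (last x p == y)].

Definition Nt (T : finType) (R : rel T) (t : nat) (v : T) : {set T} :=
  [set w | (w != v) && reach R t v w].

Definition erel (T : finType) (E : {set T * T}) : rel T := fun a b => (a, b) \in E.

Definition gedges (T : finType) (g : rel T) : {set T * T} := [set p | g p.1 p.2].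

Definition sup (T : finType) (t : nat) (E : {set T * T}) (e : T * T) : nat :=
  #|Nt (erel E) t e.1 :&: Nt (erel E) t e.2|.

Definition kt_valid (T : finType) (g : rel T) (k t : nat) (E : {set T * T}) : bool :=
  [&& E \subset gedges g,
      [forall p in E, (p.2, p.1) \in E] &
      [forall p in E, k - 2 <= sup t E p]].

Definition kt_truss_mem (T : finType) (g : rel T) (k t : nat) (e : T * T) : bool :=
  [exists E : {set T * T},
    [&& kt_valid g k t E,
        [forall E' : {set T * T}, ((E \subset E') && kt_valid g k t E') ==> (E' == E)] &
        e \in E]].

(* higher-order truss number: the maximum k with e in the (k,t)-truss.
   (Any such k satisfies k <= #|T|, since supports are at most #|T| - 2,
   so the range bound #|T|.+3 loses nothing.) *)
Definition phi (T : finType) (g : rel T) (t : nat) (e : T * T) : nat :=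
  \max_(k < #|T|.+3 | kt_truss_mem g k t e) k.

Definition Omega_V (T : finType) (g : rel T) (t : nat) (v : T) : {set T} :=
  v |: [set w | reach g t./2 v w].

(* Walks of length at most t./2 from v stay inside Omega(v), so any two
   vertices of Omega(v) are joined by a walk of length at most t inside the
   subgraph induced by Omega(v).  Hence in that subgraph every edge has all
   other vertices of Omega(v) as common t-hop neighbours, i.e. it is a valid
   (|Omega(v)|, t)-subgraph; for t >= 2 it contains the edge (u, v).  For
   t = 1, Omega(v) = {v} and the whole graph is a valid (2, t)-subgraph. *)
From mathcomp Require Import all_boot.

Set Implicit Arguments.
Unset Strict Implicit.
Unset Printing Implicit Defensive.

Section Reach.
Variables (T : finType) (R : rel T).

Lemma reachP m x y :
  reflect (exists p : seq T, [/\ size p <= m, path R x p & last x p = y])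
          (reach R m x y).
Proof.
apply: (iffP existsP).
  case=> n /existsP [p /andP [Hp /eqP Hl]].
  by exists (tval p); rewrite size_tuple -ltnS ltn_ord.
case=> p [Hs Hp Hl].
have Hn : size p < m.+1 by [].
exists (Ordinal Hn); apply/existsP; exists (in_tuple p).
by rewrite /= Hp Hl eqxx.
Qed.

Lemma reach0 x y : reach R 0 x y = (x == y).
Proof.
apply/reachP/eqP => [[[|a p] [//= _ _ ->]] | ->] //.
by exists [::].
Qed.

Lemma reach_mono m n x y : m <= n -> reach R m x y -> reach R n x y.
Proof.
move=> le_mn /reachP [p [Hs Hp Hl]]; apply/reachP; exists p.
by split=> //; apply: leq_trans Hs le_mn.
Qed.

Lemma reach_cat m n x y z :
  reach R m x y -> reach R n y z -> reach R (m + n) x z.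
Proof.
move=> /reachP [p [Hs Hp Hl]] /reachP [q [Hs' Hq Hl']].
apply/reachP; exists (p ++ q); split.
- by rewrite size_cat leq_add.
- by rewrite cat_path Hp Hl.
- by rewrite last_cat Hl.
Qed.

Lemma reach_sym m x y : symmetric R -> reach R m x y -> reach R m y x.
Proof.
move=> Rsym /reachP [p [Hs Hp Hl]]; apply/reachP.
exists (rev (belast x p)); split.
- by rewrite size_rev size_belast.
- by rewrite -Hl rev_path; under eq_path do rewrite Rsym.
- case: p Hs Hp Hl => [|a p] /= _ _ Hl; first by rewrite Hl.
  by rewrite rev_cons last_rcons.
Qed.

Lemma reach_mem_path m x p y :
  path R x p -> size p <= m -> y \in p -> reach R m x y.
Proof.
move=> Hp Hs Hy; apply/reachP.
have Hi : index y p < size p by rewrite index_mem.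
exists (take (index y p).+1 p); split.
- by apply: leq_trans _ Hs; rewrite size_take_min geq_minr.
- exact: take_path.
- by rewrite (last_nth x) size_take_min (minn_idPl Hi) /= nth_take // nth_index.
Qed.

End Reach.

Lemma reach_in_ball (T : finType) (R R' : rel T) m x y (B : {set T}) :
  x \in B -> (forall w, reach R m x w -> w \in B) -> {in B &, subrel R R'} ->
  reach R m x y -> reach R' m x y.
Proof.
move=> Bx ball_B subRR' /reachP [p [Hs Hp Hl]]; apply/reachP; exists p; split=> //.
have p_in_B : all (mem B) (x :: p).
  apply/allP => w; rewrite in_cons => /predU1P [-> // | Hw].
  exact: ball_B (reach_mem_path Hp Hs Hw).
exact: sub_in_path p_in_B Hp.
Qed.

Section Truss.
Variables (T : finType) (g : rel T).

Lemma kt_valid_leq_phi k t (E : {set T * T}) e :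
  kt_valid g k t E -> e \in E -> k <= phi g t e.
Proof.
move=> validE eE.
have lt_k : k < #|T|.+3.
  case/and3P: validE => _ _ /forallP /(_ e); rewrite eE /= => supe.
  by rewrite ltnS -add2n -leq_subLR (leq_trans supe) ?max_card.
(* A valid superset of E of maximal cardinality is maximal for inclusion. *)
pose P E' := kt_valid g k t E' && (E \subset E').
have PE : P E by rewrite /P validE subxx.
case: (arg_maxnP (fun E' : {set T * T} => #|E'|) PE) => Em /andP [validEm sub_EEm] maxEm.
rewrite -[k]/(nat_of_ord (Ordinal lt_k)); apply: leq_bigmax_cond.
apply/existsP; exists Em; rewrite validEm (subsetP sub_EEm) //= andbT.
apply/forallP => E'; apply/implyP => /andP [sub_EmE' validE'].
have le_card : #|E'| <= #|Em| by apply: maxEm; rewrite /P validE' (subset_trans sub_EEm).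
by rewrite eq_sym eqEcard sub_EmE' le_card.
Qed.

Hypothesis gsym : symmetric g.

Lemma kt_valid_gedges t : kt_valid g 2 t (gedges g).
Proof.
apply/and3P; split=> //; apply/forallP => p; apply/implyP => //.
by rewrite !inE gsym.
Qed.

Definition induced (S : {set T}) : {set T * T} :=
  [set p | [&& g p.1 p.2, p.1 \in S & p.2 \in S]].

Lemma erel_induced S a b : erel (induced S) a b = [&& g a b, a \in S & b \in S].
Proof. by rewrite /erel inE. Qed.

Lemma induced_sym S : symmetric (erel (induced S)).
Proof. by move=> a b; rewrite !erel_induced gsym [(a \in S) && _]andbC. Qed.

Hypothesis girr : irreflexive g.

Lemma kt_valid_induced t (S : {set T}) :
  {in S &, forall a b, reach (erel (induced S)) t a b} ->
  kt_valid g #|S| t (induced S).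
Proof.
move=> reachS; apply/and3P; split.
- by apply/subsetP => p; rewrite !inE => /andP [].
- by apply/forallP => -[a b]; apply/implyP; rewrite -!/(erel _ _ _) induced_sym.
apply/forallP => -[a b]; apply/implyP; rewrite inE /= => /and3P [gab Sa Sb].
have neq_ab : a != b by apply: contraTneq gab => ->; rewrite girr.
have sub_common : S :\ a :\ b \subset Nt (erel (induced S)) t a :&: Nt (erel (induced S)) t b.
  apply/subsetP => w; rewrite !in_setD1 => /and3P [Hwb Hwa Sw].
  by rewrite in_setI !inE Hwb Hwa !reachS.
apply: leq_trans (subset_leq_card sub_common).
rewrite leq_subLR (cardsD1 a S) Sa (cardsD1 b (S :\ a)) in_setD1 eq_sym neq_ab Sb.
by rewrite addnA.
Qed.

Lemma Omega_V_reach t v :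
  {in Omega_V g t v &, forall a b, reach (erel (induced (Omega_V g t v))) t a b}.
Proof.
have reach_v w : w \in Omega_V g t v -> reach (erel (induced (Omega_V g t v))) t./2 v w.
  rewrite !inE => /predU1P [-> | ]; first by apply/reachP; exists [::].
  apply: (reach_in_ball (B := Omega_V g t v)); first exact: setU11.
    by move=> x vx; rewrite !inE vx orbT.
  by move=> a b Sa Sb gab; rewrite erel_induced gab Sa Sb.
move=> a b Sa Sb.
apply: reach_mono (reach_cat (reach_sym (induced_sym _) (reach_v a Sa)) (reach_v b Sb)).
by rewrite addnn -{2}(odd_double_half t) leq_addl.
Qed.

End Truss.

Lemma Omega_V_le1 (T : finType) (g : rel T) t v : t <= 1 -> Omega_V g t v = [set v].
Proof.
move=> t_le1; rewrite /Omega_V; have -> : t./2 = 0 by case: t t_le1 => [|[]].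
by apply/setP => w; rewrite !inE reach0 eq_sym orbb.
Qed.

Lemma mem_Omega_V (T : finType) (g : rel T) t v u :
  1 < t -> g v u -> u \in Omega_V g t v.
Proof.
move=> t_gt1 gvu; rewrite !inE; apply/orP; right; apply/reachP.
by exists [:: u]; rewrite /= gvu -[1]/(2./2) half_leq.
Qed.

Theorem lemma4 (T : finType) (g : rel T) (gsym : symmetric g)
    (girr : irreflexive g) (t : nat) (ht : 1 <= t) (u v : T) (huv : g u v) :
  #|Omega_V g t v| <= phi g t (u, v).
Proof.
have uv_edge : (u, v) \in gedges g by rewrite inE.
case: (leqP t 1) => [t_le1 | t_gt1].
  rewrite Omega_V_le1 // cards1.
  exact: leq_trans _ (kt_valid_leq_phi (kt_valid_gedges gsym t) uv_edge).
apply: (kt_valid_leq_phi (kt_valid_induced gsym girr (@Omega_V_reach _ _ gsym t v))).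
by rewrite inE /= huv setU11 mem_Omega_V // gsym.
Qed.
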